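(* For every $r\ge1$ there exists a constant $C=C(r,\rho)$ such that for every integer $n\ge2$ and every integer $p\in[1,n/2]$, $$\mathbb E\big[(\log\#\mathsf T^{*n}_{n-p})^r\big]^{1/r}\le C\log\frac np\qquad\text{and}\qquad\mathbb E\big[(\log\#\mathsf T^{*n}_{n})^r\big]^{1/r}\le C\log n.$$
   Context: Fix $\alpha\in(1,2]$ and let $\rho$ be a non-degenerate probability measure on $\mathbb Z_+$ with mean one such that $\sum_{k\ge0}\rho(k)r^k=r+(1-r)^\alpha L(1-r)$ for $r\in[0,1)$, with $L$ slowly varying at $0^+$. Under $\mathbb P$, $\mathsf T^{(n)}$ is a Galton–Watson tree with offspring distribution $\rho$ conditioned to have at least one vertex at generation $n$. The reduced tree $\mathsf T^{*n}$ is the set of vertices of $\mathsf T^{(n)}$ having at least one descendant at generation $n$ (viewed as a rooted tree), and $\mathsf T^{*n}_k$ is its set of vertices at generation $k$. *)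

From Stdlib Require Import Reals List.
Import ListNotations.
Open Scope R_scope.

Inductive tree : Type := Node : list tree -> tree.

Fixpoint trunc_ok (n : nat) (t : tree) : Prop :=
  match t, n with
  | Node ts, O => ts = nil
  | Node ts, S m =>
      (fix all (l : list tree) : Prop :=
         match l with nil => True | s :: l' => trunc_ok m s /\ all l' end) ts
  end.

(** Galton-Watson weight of the tree truncated at generation n:
    product over vertices of generation < n of rho(number of children). *)
Fixpoint gw_weight (rho : nat -> R) (n : nat) (t : tree) : R :=
  match t, n with
  | Node _, O => 1
  | Node ts, S m =>
      rho (length ts) *
      (fix pr (l : list tree) : R :=
         match l with nil => 1 | s :: l' => gw_weight rho m s * pr l' end) ts
  end.

Fixpoint gen (k : nat) (t : tree) : list tree :=
  match t, k with
  | _, O => t :: nil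
  | Node ts, S j =>
      (fix cat (l : list tree) : list tree :=
         match l with nil => nil | s :: l' => gen j s ++ cat l' end) ts
  end.

Definition reaches (m : nat) (t : tree) : bool :=
  negb (Nat.eqb (length (gen m t)) 0).

(** #T^{*n}_k : number of vertices at generation k having at least one
    descendant at generation n. *)
Definition reduced_count (n k : nat) (t : tree) : nat :=
  length (filter (reaches (n - k)) (gen k t)).

Definition lsum (f : tree -> R) (L : list tree) : R :=
  fold_right (fun t acc => f t + acc) 0 L.

(** Sum of a nonnegative family over the (countable) set S of trees:
    the supremum of finite partial sums. *)
Definition has_sum (S : tree -> Prop) (f : tree -> R) (v : R) : Prop :=
  is_lub (fun s => exists L, NoDup L /\ Forall S L /\ s = lsum f L) v.

(** E is the expectation of f(T^{(n)}), where T^{(n)} is a GW(rho) tree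
    conditioned to have a vertex at generation n (f only depends on
    generations <= n, so we work with the tree truncated at generation n). *)
Definition gw_cond_expect (rho : nat -> R) (n : nat) (f : tree -> R) (E : R) : Prop :=
  exists A P,
    has_sum (fun t => trunc_ok n t /\ reaches n t = true)
            (fun t => gw_weight rho n t * f t) A /\
    has_sum (fun t => trunc_ok n t /\ reaches n t = true) (gw_weight rho n) P /\
    E = A / P.

(** Real power with the convention 0^y = 0 (x^y for x > 0). *)
Definition rpow (x y : R) : R :=
  if Rle_dec x 0 then 0 else Rpower x y.

Definition slowly_varying_0 (L : R -> R) : Prop :=
  (forall x, 0 < x <= 1 -> 0 < L x) /\
  forall lam, 0 < lam -> forall eps, 0 < eps ->
    exists delta, 0 < delta /\
      forall x, 0 < x < delta -> Rabs (L (lam * x) / L x - 1) < eps.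

(* Let [q_n = P(Z_n > 0)].  Since the offspring generating function satisfies
   [f (1 - x) = 1 - x + x^alpha L(x)], the survival probabilities obey
   [q_{n+1} = q_n (1 - h(q_n))] with [h(x) = x^(alpha-1) L(x)].

   For [M >= e^r] one has [(ln z)^r <= (ln M)^r (1 + z / M)], and
   [E[#T^{*n}_{n-p}] = E[Z_{n-p}] q_p = q_p]; conditioning on [Z_n > 0] and taking
   [M = max(e^r, 2 q_p / q_n)] gives
   [E[(ln #T^{*n}_{n-p})^r]^(1/r) <= 2 (r + ln 2 + ln (q_p / q_n))].

   It remains to bound [ln (q_p / q_n)] by [K ln (n / p)].  Slow variation of [L] and [alpha > 1]
   give [h(x/2) <= theta h(x)] near [0], from which a doubling argument yields [n h(q_n) = O(1)];
   then [ln (q_p / q_n) = sum_{p <= k < n} -ln (1 - h(q_k)) = O(sum_{p <= k < n} 1/k)].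

   The expectations are suprema of finite sums; they are controlled by exact recursions for the
   sums over the finitely many trees whose degrees are all at most [D], which converge to the
   untruncated quantities as [D] grows. *)

From Stdlib Require Import Reals List Lra Lia FinFun.
Import ListNotations.
Open Scope R_scope.

Definition sumR {A : Type} (f : A -> R) (l : list A) : R :=
  fold_right (fun x acc => f x + acc) 0 l.

Definition prodR {A : Type} (f : A -> R) (l : list A) : R :=
  fold_right (fun x acc => f x * acc) 1 l.

Definition b2R (b : bool) : R := if b then 1 else 0.

Section ListSums.
Context {A : Type}.
Implicit Types (f g : A -> R) (l : list A).

Lemma sumR_app f l1 l2 : sumR f (l1 ++ l2) = sumR f l1 + sumR f l2.
Proof. induction l1 as [|x l1 IH]; simpl; [|rewrite IH]; lra. Qed.

Lemma sumR_ext f g l : (forall x, In x l -> f x = g x) -> sumR f l = sumR g l.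
Proof. induction l as [|x l IH]; simpl; intros H; auto. rewrite H, IH; auto. Qed.

Lemma sumR_le f g l : (forall x, In x l -> f x <= g x) -> sumR f l <= sumR g l.
Proof.
  induction l as [|x l IH]; simpl; intros H; [lra|].
  pose proof (H x (or_introl eq_refl)). pose proof (IH (fun y h => H y (or_intror h))). lra.
Qed.

Lemma sumR_nonneg f l : (forall x, In x l -> 0 <= f x) -> 0 <= sumR f l.
Proof.
  induction l as [|x l IH]; simpl; intros H; [lra|].
  pose proof (H x (or_introl eq_refl)). pose proof (IH (fun y h => H y (or_intror h))). lra.
Qed.

Lemma sumR_plus f g l : sumR (fun x => f x + g x) l = sumR f l + sumR g l.
Proof. induction l; simpl; lra. Qed.

Lemma sumR_minus f g l : sumR (fun x => f x - g x) l = sumR f l - sumR g l.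
Proof. induction l; simpl; lra. Qed.

Lemma sumR_scal c f l : sumR (fun x => c * f x) l = c * sumR f l.
Proof. induction l as [|x l IH]; simpl; [|rewrite IH]; lra. Qed.

Lemma sumR_filter f (b : A -> bool) l :
  sumR f (filter b l) = sumR (fun x => f x * b2R (b x)) l.
Proof.
  induction l as [|x l IH]; simpl; auto.
  destruct (b x); simpl; rewrite IH; unfold b2R; ring.
Qed.

Lemma sumR_incl f l1 l2 :
  (forall x, 0 <= f x) -> NoDup l1 -> incl l1 l2 -> sumR f l1 <= sumR f l2.
Proof.
  intros Hf Hl1; revert l2; induction Hl1 as [|x l1 Hx Hl1 IH]; intros l2 Hincl.
  - apply sumR_nonneg; auto.
  - destruct (in_split x l2) as [u [v ->]]; [apply Hincl; left; auto|].
    assert (Hsub : sumR f l1 <= sumR f (u ++ v)).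
    { apply IH. intros y Hy.
      destruct (in_app_or _ _ _ (Hincl y (or_intror Hy))) as [?|[<-|?]];
        [apply in_or_app; auto|contradiction|apply in_or_app; auto]. }
    rewrite sumR_app in *. simpl. lra.
Qed.
End ListSums.

Lemma sumR_map {A B : Type} (f : B -> R) (g : A -> B) l :
  sumR f (map g l) = sumR (fun x => f (g x)) l.
Proof. induction l as [|x l IH]; simpl; [|rewrite IH]; auto. Qed.

Lemma sumR_flat_map {A B : Type} (f : B -> R) (g : A -> list B) l :
  sumR f (flat_map g l) = sumR (fun x => sumR f (g x)) l.
Proof. induction l as [|x l IH]; simpl; [|rewrite sumR_app, IH]; auto. Qed.

Lemma sumR_seq (f : nat -> R) D : sumR f (seq 0 (S D)) = sum_f_R0 f D.
Proof. induction D as [|D IH]; [simpl; lra|]. rewrite seq_S, sumR_app, IH. simpl. lra. Qed.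

Lemma prodR_nonneg {A : Type} (f : A -> R) l : (forall x, 0 <= f x) -> 0 <= prodR f l.
Proof. intros H; induction l; simpl; [lra|]. apply Rmult_le_pos; auto. Qed.

Lemma prodR_existsb {A : Type} (f : A -> R) (b : A -> bool) l :
  prodR f l * b2R (existsb b l) = prodR f l - prodR (fun x => f x * b2R (negb (b x))) l.
Proof.
  induction l as [|x l IH]; simpl; unfold b2R in *; [simpl; lra|].
  destruct (b x); simpl; [lra|]. rewrite Rmult_assoc, IH. lra.
Qed.

Fixpoint tuples {A : Type} (k : nat) (l : list A) : list (list A) :=
  match k with
  | O => [nil]
  | S k' => flat_map (fun x => map (cons x) (tuples k' l)) l
  end.

Lemma In_tuples {A : Type} k (l : list A) xs :
  In xs (tuples k l) <-> length xs = k /\ Forall (fun x => In x l) xs.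
Proof.
  revert xs; induction k as [|k IH]; intros xs; simpl.
  - split; [intros [<-|[]]; simpl; auto|].
    intros [H _]. destruct xs; [auto|discriminate].
  - rewrite in_flat_map. split.
    + intros [x [Hx Hm]]. apply in_map_iff in Hm as [ys [<- Hys]].
      apply IH in Hys as [Hlen Hall]. simpl; auto.
    + intros [Hlen Hall]. destruct xs as [|x xs]; [discriminate|].
      inversion Hall; subst. exists x; split; auto.
      apply in_map, IH. simpl in Hlen; auto.
Qed.

Lemma sumR_tuples_prodR {A : Type} (f : A -> R) k l :
  sumR (prodR f) (tuples k l) = sumR f l ^ k.
Proof.
  induction k as [|k IH]; simpl; [lra|].
  rewrite sumR_flat_map, Rmult_comm, <- sumR_scal.
  apply sumR_ext; intros x _. rewrite sumR_map, <- IH, Rmult_comm, <- sumR_scal. reflexivity.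
Qed.

Lemma NoDup_flat_map {A B : Type} (g : A -> list B) l :
  NoDup l -> (forall x, In x l -> NoDup (g x)) ->
  (forall x y z, In x l -> In y l -> x <> y -> In z (g x) -> In z (g y) -> False) ->
  NoDup (flat_map g l).
Proof.
  induction 1 as [|x l Hx Hl IH]; intros Hg Hdisj; simpl; [constructor|].
  apply NoDup_app.
  - apply Hg; left; auto.
  - apply IH; [intros; apply Hg; right; auto|intros; eapply Hdisj; eauto; right; auto].
  - intros z Hz1 Hz2. apply in_flat_map in Hz2 as [y [Hy Hz2]].
    apply (Hdisj x y z); auto; [left|right|intros ->]; auto.
Qed.

Lemma NoDup_tuples {A : Type} k (l : list A) : NoDup l -> NoDup (tuples k l).
Proof.
  intros Hl; induction k as [|k IH]; simpl; [repeat constructor; auto|].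
  apply NoDup_flat_map; auto.
  - intros x _. apply Injective_map_NoDup; [intros u v H; inversion H|]; auto.
  - intros x y z _ _ Hxy Hx Hy.
    apply in_map_iff in Hx as [u [<- _]]. apply in_map_iff in Hy as [v [Hv _]].
    inversion Hv; auto.
Qed.

Lemma trunc_ok_0 t : trunc_ok 0 t <-> t = Node nil.
Proof. destruct t as [ts]; simpl. split; intros H; [subst|inversion H]; auto. Qed.

Lemma trunc_ok_S m ts : trunc_ok (S m) (Node ts) <-> Forall (trunc_ok m) ts.
Proof.
  simpl. induction ts as [|t ts IH]; simpl; [split; auto|]. rewrite IH.
  split; [intros [? ?]; constructor; auto|intros H; inversion H; auto].
Qed.

Lemma gw_weight_0 rho t : gw_weight rho 0 t = 1.
Proof. destruct t; reflexivity. Qed.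

Lemma gw_weight_S rho m ts :
  gw_weight rho (S m) (Node ts) = rho (length ts) * prodR (gw_weight rho m) ts.
Proof. reflexivity. Qed.

Lemma gw_weight_nonneg rho n t : (forall k, 0 <= rho k) -> 0 <= gw_weight rho n t.
Proof.
  intros Hrho; revert t; induction n as [|n IH]; intros [ts].
  - rewrite gw_weight_0; lra.
  - rewrite gw_weight_S. apply Rmult_le_pos; [|apply prodR_nonneg]; auto.
Qed.

Lemma gen_0 t : gen 0 t = [t].
Proof. destruct t; reflexivity. Qed.

Lemma gen_S j ts : gen (S j) (Node ts) = flat_map (gen j) ts.
Proof. simpl. induction ts; simpl; auto. Qed.

Lemma reaches_S n ts : reaches (S n) (Node ts) = existsb (reaches n) ts.
Proof.
  unfold reaches. rewrite gen_S. induction ts as [|t ts IH]; simpl; auto.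
  rewrite length_app. destruct (length (gen n t)); simpl; auto.
Qed.

Lemma reduced_count_0 n t : INR (reduced_count n 0 t) = b2R (reaches n t).
Proof.
  unfold reduced_count. rewrite gen_0, Nat.sub_0_r. simpl.
  destruct (reaches n t); simpl; lra.
Qed.

Lemma reduced_count_S m j ts : (j <= m)%nat ->
  INR (reduced_count (S m) (S j) (Node ts)) = sumR (fun t => INR (reduced_count m j t)) ts.
Proof.
  intros Hjm. unfold reduced_count. rewrite gen_S.
  replace (S m - S j)%nat with (m - j)%nat by lia.
  induction ts as [|t ts IH]; simpl; auto.
  rewrite filter_app, length_app, plus_INR, IH. reflexivity.
Qed.

Fixpoint bounded_trees (D n : nat) : list tree :=
  match n with
  | O => [Node nil]
  | S m => flat_map (fun k => map Node (tuples k (bounded_trees D m))) (seq 0 (S D))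
  end.

Fixpoint degree_le (D n : nat) (t : tree) : Prop :=
  match n, t with
  | O, _ => True
  | S m, Node ts => (length ts <= D)%nat /\ Forall (degree_le D m) ts
  end.

Lemma In_bounded_trees D n t : trunc_ok n t -> degree_le D n t -> In t (bounded_trees D n).
Proof.
  revert t; induction n as [|n IH]; intros [ts] Ht Hdeg.
  - apply trunc_ok_0 in Ht. rewrite Ht. left; auto.
  - apply trunc_ok_S in Ht. destruct Hdeg as [Hlen Hdeg].
    cbn [bounded_trees]. apply in_flat_map. exists (length ts). split; [apply in_seq; lia|].
    apply in_map, In_tuples. split; auto.
    rewrite Forall_forall in *. auto.
Qed.

Lemma bounded_trees_trunc_ok D n t : In t (bounded_trees D n) -> trunc_ok n t.
Proof.
  revert t; induction n as [|n IH]; intros t Ht; cbn [bounded_trees] in Ht.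
  - destruct Ht as [<-|[]]. simpl; auto.
  - apply in_flat_map in Ht as [k [_ Ht]]. apply in_map_iff in Ht as [ts [<- Ht]].
    apply In_tuples in Ht as [_ Ht]. apply trunc_ok_S.
    rewrite Forall_forall in *. auto.
Qed.

Lemma NoDup_bounded_trees D n : NoDup (bounded_trees D n).
Proof.
  induction n as [|n IH]; cbn [bounded_trees]; [repeat constructor; auto|].
  apply NoDup_flat_map; [apply seq_NoDup| |].
  - intros k _. apply Injective_map_NoDup; [intros u v H; inversion H; auto|].
    apply NoDup_tuples; auto.
  - intros k k' t _ _ Hk Ht Ht'.
    apply in_map_iff in Ht as [ts [<- Hts]]. apply in_map_iff in Ht' as [ts' [Heq Hts']].
    inversion Heq; subst. apply In_tuples in Hts, Hts'. destruct Hts, Hts'. congruence.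
Qed.

Lemma degree_le_mono D D' n t : (D <= D')%nat -> degree_le D n t -> degree_le D' n t.
Proof.
  revert t; induction n as [|n IH]; intros [ts] HD H; simpl in *; auto.
  destruct H as [Hlen H]. split; [lia|]. rewrite Forall_forall in *. auto.
Qed.

Lemma Forall_degree_le_exists n ts :
  (forall t, In t ts -> exists D, degree_le D n t) -> exists D, Forall (degree_le D n) ts.
Proof.
  induction ts as [|t ts IH]; intros H; [exists 0%nat; constructor|].
  destruct (H t (or_introl eq_refl)) as [D1 H1].
  destruct IH as [D2 H2]; [intros; apply H; right; auto|].
  exists (Nat.max D1 D2). constructor; [eapply degree_le_mono; [|eauto]; lia|].
  rewrite Forall_forall in *. intros; eapply degree_le_mono; [|eauto]; lia.
Qed.

Lemma degree_le_exists n t : exists D, degree_le D n t.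
Proof.
  revert t; induction n as [|n IH]; intros [ts]; [exists 0%nat; simpl; auto|].
  destruct (Forall_degree_le_exists n ts) as [D HD]; [intros; apply IH|].
  exists (Nat.max D (length ts)). simpl. split; [lia|].
  rewrite Forall_forall in *. intros; eapply degree_le_mono; [|eauto]; lia.
Qed.

Lemma incl_bounded_trees n ts :
  Forall (trunc_ok n) ts -> exists D, incl ts (bounded_trees D n).
Proof.
  intros Hts. destruct (Forall_degree_le_exists n ts) as [D HD].
  { intros; apply degree_le_exists. }
  exists D. intros t Ht. rewrite Forall_forall in *. apply In_bounded_trees; auto.
Qed.

Lemma sumR_tuples_weighted_sum {A : Type} (w z : A -> R) k l :
  (forall x, 0 <= w x) -> (forall x, 0 <= z x) -> sumR w l <= 1 ->
  sumR (fun xs => prodR w xs * sumR z xs) (tuples k l) <= INR k * sumR (fun x => w x * z x) l.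
Proof.
  intros Hw Hz Hl. set (mu := sumR (fun x => w x * z x) l).
  assert (Hm : 0 <= sumR w l) by (apply sumR_nonneg; auto).
  assert (Hmu : 0 <= mu) by (apply sumR_nonneg; intros; apply Rmult_le_pos; auto).
  assert (Hpow : forall j, sumR w l ^ j <= 1) by (intros j; rewrite <- (pow1 j); apply pow_incr; lra).
  induction k as [|k IH]; [simpl; lra|]. cbn [tuples]. rewrite sumR_flat_map, S_INR.
  transitivity (sumR (fun x => sumR w l ^ k * (w x * z x) + INR k * mu * w x) l).
  - apply sumR_le. intros x _. rewrite sumR_map. simpl.
    rewrite (sumR_ext _ (fun xs => w x * z x * prodR w xs + w x * (prodR w xs * sumR z xs)))
      by (intros; ring).
    rewrite sumR_plus, !sumR_scal, sumR_tuples_prodR.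
    pose proof (Rmult_le_compat_l _ _ _ (Hw x) IH). lra.
  - rewrite sumR_plus, !sumR_scal. fold mu.
    pose proof (Rmult_le_compat_r _ _ _ Hmu (Hpow k)).
    pose proof (Rmult_le_compat_l _ _ _ (Rmult_le_pos _ _ (pos_INR k) Hmu) Hl). lra.
Qed.

Section TruncatedMoments.
Variable rho : nat -> R.
Hypothesis rho_nonneg : forall k, 0 <= rho k.
Hypothesis rho_partial_le1 : forall D, sum_f_R0 rho D <= 1.
Hypothesis mean_partial_le1 : forall D, sum_f_R0 (fun k => INR k * rho k) D <= 1.

Lemma sumR_bounded_trees_S (F : tree -> R) (H : list tree -> R) D m :
  (forall ts, F (Node ts) = rho (length ts) * H ts) ->
  sumR F (bounded_trees D (S m)) = sum_f_R0 (fun k => rho k * sumR H (tuples k (bounded_trees D m))) D.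
Proof.
  intros HF. cbn [bounded_trees]. rewrite sumR_flat_map, <- sumR_seq. apply sumR_ext. intros k _.
  rewrite sumR_map, <- sumR_scal. apply sumR_ext. intros ts Hts.
  apply In_tuples in Hts as [Hlen _]. rewrite HF, Hlen. reflexivity.
Qed.

(* Degree-truncated versions of [1] and of [P(Z_n > 0)]. *)
Definition trunc_mass D n := sumR (gw_weight rho n) (bounded_trees D n).
Definition trunc_survival D n :=
  sumR (fun t => gw_weight rho n t * b2R (reaches n t)) (bounded_trees D n).

Lemma trunc_mass_0 D : trunc_mass D 0 = 1.
Proof. unfold trunc_mass. simpl. lra. Qed.

Lemma trunc_survival_0 D : trunc_survival D 0 = 1.
Proof. unfold trunc_survival. simpl. unfold b2R. simpl. lra. Qed.

Lemma trunc_mass_S D m :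
  trunc_mass D (S m) = sum_f_R0 (fun k => rho k * trunc_mass D m ^ k) D.
Proof.
  unfold trunc_mass. rewrite (sumR_bounded_trees_S _ (prodR (gw_weight rho m))) by apply gw_weight_S.
  apply sum_eq. intros k _. rewrite sumR_tuples_prodR. reflexivity.
Qed.

Lemma trunc_survival_S D m : trunc_survival D (S m) =
  sum_f_R0 (fun k => rho k * (trunc_mass D m ^ k - (trunc_mass D m - trunc_survival D m) ^ k)) D.
Proof.
  unfold trunc_survival.
  rewrite (sumR_bounded_trees_S _ (fun ts => prodR (gw_weight rho m) ts
             - prodR (fun t => gw_weight rho m t * b2R (negb (reaches m t))) ts)).
  2:{ intros ts. rewrite gw_weight_S, reaches_S, Rmult_assoc, prodR_existsb. reflexivity. }
  apply sum_eq. intros k _. rewrite sumR_minus, !sumR_tuples_prodR. unfold trunc_mass.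
  rewrite <- sumR_minus. do 3 f_equal. apply sumR_ext. intros t _.
  destruct (reaches m t); unfold b2R; simpl; ring.
Qed.

Lemma trunc_mass_bounds D n : 0 <= trunc_mass D n <= 1.
Proof.
  induction n as [|n IH]; [rewrite trunc_mass_0; lra|]. rewrite trunc_mass_S. split.
  - apply cond_pos_sum. intros; apply Rmult_le_pos; auto. apply pow_le; lra.
  - eapply Rle_trans; [|apply (rho_partial_le1 D)]. apply sum_Rle. intros k _.
    rewrite <- (Rmult_1_r (rho k)) at 2. apply Rmult_le_compat_l; auto.
    rewrite <- (pow1 k); apply pow_incr; lra.
Qed.

Lemma trunc_survival_bounds D n : 0 <= trunc_survival D n <= trunc_mass D n.
Proof.
  unfold trunc_survival, trunc_mass. split.
  - apply sumR_nonneg. intros t _. apply Rmult_le_pos; [apply gw_weight_nonneg; auto|].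
    unfold b2R; destruct reaches; lra.
  - apply sumR_le. intros t _. pose proof (gw_weight_nonneg rho n t rho_nonneg).
    unfold b2R; destruct reaches; lra.
Qed.

(* Many-to-one: [E[#T^{*(p+j)}_j] = E[Z_j] P(Z_p > 0) <= P(Z_p > 0)], as mean <= 1. *)
Lemma sumR_reduced_count_le D p j :
  sumR (fun t => gw_weight rho (p + j) t * INR (reduced_count (p + j) j t))
       (bounded_trees D (p + j)) <= trunc_survival D p.
Proof.
  induction j as [|j IH].
  - rewrite Nat.add_0_r. right. apply sumR_ext. intros t _. rewrite reduced_count_0. reflexivity.
  - replace (p + S j)%nat with (S (p + j)) by lia.
    rewrite (sumR_bounded_trees_S _ (fun ts => prodR (gw_weight rho (p + j)) ts
               * sumR (fun t => INR (reduced_count (p + j) j t)) ts)).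
    2:{ intros ts. rewrite gw_weight_S, reduced_count_S by lia. ring. }
    set (mu := sumR (fun t => gw_weight rho (p + j) t * INR (reduced_count (p + j) j t))
                    (bounded_trees D (p + j))) in *.
    assert (Hmu : 0 <= mu).
    { apply sumR_nonneg. intros; apply Rmult_le_pos; [apply gw_weight_nonneg; auto|apply pos_INR]. }
    apply Rle_trans with (sum_f_R0 (fun k => INR k * rho k) D * mu);
      [|pose proof (mean_partial_le1 D); nra].
    rewrite Rmult_comm, scal_sum. apply sum_Rle. intros k _.
    rewrite (Rmult_comm (INR k)), Rmult_assoc. apply Rmult_le_compat_l; auto.
    apply sumR_tuples_weighted_sum; [intros; apply gw_weight_nonneg; auto|intros; apply pos_INR|].
    apply trunc_mass_bounds.
Qed.
End TruncatedMoments.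

Lemma infinite_sum_ext (a b : nat -> R) A :
  (forall k, a k = b k) -> infinite_sum a A -> infinite_sum b A.
Proof. intros Hab. apply Un_cv_ext. intros n. apply sum_eq. auto. Qed.

Lemma infinite_sum_minus (a b : nat -> R) A B :
  infinite_sum a A -> infinite_sum b B -> infinite_sum (fun k => a k - b k) (A - B).
Proof.
  intros Ha Hb. apply (Un_cv_ext (fun n => sum_f_R0 a n - sum_f_R0 b n)).
  - intros n. symmetry. apply minus_sum.
  - apply CV_minus; auto.
Qed.

Lemma infinite_sum_scal c (a : nat -> R) A :
  infinite_sum a A -> infinite_sum (fun k => c * a k) (c * A).
Proof.
  intros Ha. apply (Un_cv_ext (fun n => c * sum_f_R0 a n)).
  - intros n. rewrite scal_sum. apply sum_eq. intros. ring.
  - apply CV_mult; auto. intros e He. exists 0%nat. intros. unfold R_dist.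
    rewrite Rminus_diag, Rabs_R0. lra.
Qed.

Lemma infinite_sum_le (a b : nat -> R) A B :
  (forall k, a k <= b k) -> infinite_sum a A -> infinite_sum b B -> A <= B.
Proof. intros Hab. apply Rle_cv_lim. intros n. apply sum_Rle. auto. Qed.

Lemma term_le_infinite_sum (a : nat -> R) A k :
  (forall k, 0 <= a k) -> infinite_sum a A -> a k <= A.
Proof.
  intros Ha HA. eapply Rle_trans; [|apply (sum_incr a k A HA Ha)].
  destruct k; simpl; [lra|]. pose proof (cond_pos_sum a k Ha). lra.
Qed.

Lemma pow_le1 a k : 0 <= a <= 1 -> a ^ k <= 1.
Proof. intros Ha. rewrite <- (pow1 k). apply pow_incr. lra. Qed.

Lemma pow_sub_le a b k : 0 <= a <= 1 -> 0 <= b <= 1 -> a ^ k - b ^ k <= INR k * Rabs (a - b).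
Proof.
  intros Ha Hb. induction k as [|k IH]; [simpl; lra|]. rewrite S_INR. simpl.
  pose proof (pow_le b k). pose proof (pow_le1 b k Hb).
  pose proof (Rle_abs (a - b)). pose proof (Rabs_pos (a - b)).
  replace (a * a ^ k - b * b ^ k) with (a * (a ^ k - b ^ k) + b ^ k * (a - b)) by ring.
  assert (a * (a ^ k - b ^ k) <= INR k * Rabs (a - b)).
  { destruct (Rle_dec 0 (a ^ k - b ^ k)); [nra|]. pose proof (pos_INR k). nra. }
  assert (b ^ k * (a - b) <= Rabs (a - b)) by (destruct (Rle_dec 0 (a - b)); nra).
  lra.
Qed.

Lemma pow_gap_mono s a b k :
  0 <= s -> s <= a -> a <= b -> a ^ k - (a - s) ^ k <= b ^ k - (b - s) ^ k.
Proof.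
  intros Hs Ha Hb. induction k as [|k IH]; [simpl; lra|]. simpl.
  assert (0 <= (a - s) ^ k <= (b - s) ^ k) by (split; [apply pow_le|apply pow_incr]; lra).
  assert ((a - s) ^ k <= a ^ k) by (apply pow_incr; lra).
  nra.
Qed.

Lemma pow_complement_ratio x y k : 0 < x -> x <= y -> y <= 1 ->
  x * (1 - (1 - y) ^ k) <= y * (1 - (1 - x) ^ k).
Proof.
  intros Hx Hxy Hy. induction k as [|k IH]; [simpl; lra|]. simpl.
  assert (0 <= (1 - y) ^ k <= (1 - x) ^ k) by (split; [apply pow_le|apply pow_incr]; lra).
  assert (x * y * (1 - y) ^ k <= x * y * (1 - x) ^ k) by (apply Rmult_le_compat_l; nra).
  lra.
Qed.

Lemma ln_le_sub1 y : 0 < y -> ln y <= y - 1.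
Proof. intros Hy. pose proof (exp_ineq1_le (ln y)). rewrite exp_ln in *; lra. Qed.

Lemma ln_le x y : 0 < x -> x <= y -> ln x <= ln y.
Proof. intros Hx [Hxy|<-]; [left; apply ln_increasing|]; lra. Qed.

Lemma ln_div x y : 0 < x -> 0 < y -> ln (x / y) = ln x - ln y.
Proof. intros. unfold Rdiv. rewrite ln_mult, ln_Rinv; try lra. apply Rinv_0_lt_compat; auto. Qed.

Lemma ln_nonpos x : x <= 0 -> ln x = 0.
Proof. intros Hx. unfold ln. destruct (Rlt_dec 0 x); [exfalso; lra|reflexivity]. Qed.

Lemma ln_ge0 x : 1 <= x -> 0 <= ln x.
Proof. intros. rewrite <- ln_1. apply ln_le; lra. Qed.

Lemma Rdiv_nonneg a b : 0 <= a -> 0 < b -> 0 <= a / b.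
Proof. intros. unfold Rdiv. apply Rmult_le_pos; [|left; apply Rinv_0_lt_compat]; auto. Qed.

Lemma ln2_pos : 0 < ln 2.
Proof. pose proof ln_lt_2. lra. Qed.

Lemma neg_ln_pos x : 0 < x < 1 -> 0 < - ln x.
Proof. intros Hx. pose proof (ln_increasing x 1 ltac:(lra) ltac:(lra)). rewrite ln_1 in *. lra. Qed.

Lemma inv_INR_le_ln_succ n : (1 <= n)%nat -> / INR n <= 2 * ln (INR (S n) / INR n).
Proof.
  intros Hn. assert (1 <= INR n) by (apply (le_INR 1); lia). rewrite S_INR.
  pose proof (ln_le_sub1 (INR n / (INR n + 1)) ltac:(apply Rdiv_lt_0_compat; lra)).
  rewrite ln_div in * by lra.
  assert (INR n / (INR n + 1) - 1 = - / (INR n + 1)) by (field; lra).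
  assert (/ INR n <= 2 * / (INR n + 1)).
  { apply (Rmult_le_reg_r (INR n * (INR n + 1))); [nra|]. field_simplify; lra. }
  lra.
Qed.

Lemma affine_le_linear a b x : 0 <= a -> ln 2 <= x -> a + b * x <= (a / ln 2 + b) * x.
Proof.
  intros Ha Hx. pose proof ln2_pos.
  assert (a <= a / ln 2 * x); [|lra].
  replace (a / ln 2 * x) with (a * (x / ln 2)) by (field; lra).
  assert (1 <= x / ln 2) by (apply (Rmult_le_reg_r (ln 2)); [lra|]; field_simplify; lra). nra.
Qed.

Lemma log_dominated a b M0 : 0 < b -> 0 < M0 -> exists M, M0 <= M /\ a + b * ln M <= M.
Proof.
  intros Hb HM0. exists (Rmax M0 (2 * (a + b * (ln (2 * b) - 1)))).
  pose proof (Rmax_l M0 (2 * (a + b * (ln (2 * b) - 1)))).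
  pose proof (Rmax_r M0 (2 * (a + b * (ln (2 * b) - 1)))).
  set (M := Rmax _ _) in *. split; [auto|].
  pose proof (ln_le_sub1 (M / (2 * b)) ltac:(apply Rdiv_lt_0_compat; lra)).
  rewrite ln_div in H1 by lra.
  apply (Rmult_le_compat_l b) in H1; [|lra].
  assert (b * (M / (2 * b)) = M / 2) by (field; lra). nra.
Qed.

Lemma dyadic_bracket x y : 0 < y <= x -> exists J, x * (/ 2) ^ S J < y <= x * (/ 2) ^ J.
Proof.
  intros Hy.
  assert (Hdescend : forall N x', y <= x' -> x' * (/ 2) ^ N < y ->
            exists J, x' * (/ 2) ^ S J < y <= x' * (/ 2) ^ J).
  { induction N as [|N IH]; intros x' Hx' HN; [simpl in HN; lra|].
    destruct (Rlt_le_dec (x' * / 2) y) as [Hlt|Hle]; [exists 0%nat; simpl; lra|].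
    destruct (IH (x' * / 2) Hle) as [J HJ]; [simpl in HN; rewrite Rmult_assoc; auto|].
    exists (S J).
    replace (x' * (/ 2) ^ S (S J)) with (x' * / 2 * (/ 2) ^ S J) by (simpl; ring).
    replace (x' * (/ 2) ^ S J) with (x' * / 2 * (/ 2) ^ J) by (simpl; ring). auto. }
  destruct (pow_lt_1_zero (/ 2) ltac:(rewrite Rabs_right; lra) (y / x)
              ltac:(apply Rdiv_lt_0_compat; lra)) as [N HN].
  apply (Hdescend N); [lra|]. specialize (HN N (le_n N)).
  rewrite Rabs_right in HN by (apply Rle_ge, pow_le; lra).
  apply (Rmult_lt_compat_l x) in HN; [|lra].
  replace (x * (y / x)) with y in HN by (field; lra). auto.
Qed.

Lemma ln_div_lt_halvings x y J : 0 < x -> 0 < y -> x * (/ 2) ^ S J < y ->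
  ln (x / y) < INR (S J) * ln 2.
Proof.
  intros Hx Hy HJ. rewrite <- ln_pow by lra. apply ln_increasing; [apply Rdiv_lt_0_compat; lra|].
  apply (Rmult_lt_reg_r (y * (/ 2) ^ S J)); [apply Rmult_lt_0_compat; [|apply pow_lt]; lra|].
  replace (x / y * (y * (/ 2) ^ S J)) with (x * (/ 2) ^ S J) by (field; lra).
  replace (2 ^ S J * (y * (/ 2) ^ S J)) with (y * (2 * / 2) ^ S J) by (rewrite Rpow_mult_distr; ring).
  rewrite Rinv_r, pow1; lra.
Qed.

Section Summation.
Variable S : tree -> Prop.

Definition partial_sums (f : tree -> R) (s : R) : Prop :=
  exists L, NoDup L /\ Forall S L /\ s = lsum f L.

Lemma has_sum_exists f B :
  (forall L, NoDup L -> Forall S L -> lsum f L <= B) -> exists v, has_sum S f v.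
Proof.
  intros HB. destruct (completeness (partial_sums f)) as [v Hv].
  - exists B. intros s [L [HL [HS ->]]]. auto.
  - exists 0. exists nil. repeat split; constructor.
  - exists v. exact Hv.
Qed.

Lemma has_sum_ge f v L : has_sum S f v -> NoDup L -> Forall S L -> lsum f L <= v.
Proof. intros [Hub _] HL HS. apply Hub. exists L. auto. Qed.

Lemma has_sum_le f v B :
  has_sum S f v -> (forall L, NoDup L -> Forall S L -> lsum f L <= B) -> v <= B.
Proof. intros [_ Hlub] HB. apply Hlub. intros s [L [HL [HS ->]]]. auto. Qed.

Lemma has_sum_ratio_le (w f z : tree -> R) P0 Z c M :
  (forall t, 0 <= w t) -> 0 < M -> 0 <= c -> 0 < P0 ->
  (forall t, S t -> f t <= c * (1 + z t / M)) ->
  (forall L, NoDup L -> Forall S L -> lsum w L <= 1) ->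
  (forall L, NoDup L -> Forall S L -> lsum (fun t => w t * z t) L <= Z) ->
  (exists L, NoDup L /\ Forall S L /\ P0 <= lsum w L) ->
  exists A P, has_sum S (fun t => w t * f t) A /\ has_sum S w P /\ A / P <= c * (1 + Z / (M * P0)).
Proof.
  intros Hw HM Hc HP0 Hf Hw1 HZ [L0 [HL0 [HS0 HwL0]]].
  assert (HZ0 : 0 <= Z) by (apply (HZ nil); constructor).
  assert (Hpartial : forall L, NoDup L -> Forall S L ->
            lsum (fun t => w t * f t) L <= c * (lsum w L + Z / M)).
  { intros L HL HS. eapply Rle_trans.
    - apply (sumR_le (fun t => w t * f t) (fun t => c * w t + (c / M) * (w t * z t))).
      intros t Ht. rewrite Forall_forall in HS. specialize (Hf t (HS t Ht)). pose proof (Hw t).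
      replace (c * w t + c / M * (w t * z t)) with (w t * (c * (1 + z t / M))) by (field; lra).
      apply Rmult_le_compat_l; lra.
    - rewrite sumR_plus, !sumR_scal. specialize (HZ L HL HS).
      assert (c / M * sumR (fun t => w t * z t) L <= c / M * Z)
        by (apply Rmult_le_compat_l; [apply Rdiv_nonneg|]; auto; lra).
      change (lsum w L) with (sumR w L).
      replace (c * (sumR w L + Z / M)) with (c * sumR w L + c / M * Z) by (field; lra). lra. }
  destruct (has_sum_exists w 1 Hw1) as [P HP].
  assert (HP0P : P0 <= P) by (eapply Rle_trans; [exact HwL0|apply has_sum_ge; auto]).
  destruct (has_sum_exists (fun t => w t * f t) (c * (P + Z / M))) as [A HA].
  { intros L HL HS. eapply Rle_trans; [apply Hpartial; auto|].
    apply Rmult_le_compat_l; auto. pose proof (has_sum_ge w P L HP HL HS). lra. }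
  exists A, P. split; [auto|]. split; [auto|].
  assert (HAle : A <= c * (P + Z / M)).
  { apply (has_sum_le _ _ _ HA). intros L HL HS. eapply Rle_trans; [apply Hpartial; auto|].
    apply Rmult_le_compat_l; auto. pose proof (has_sum_ge w P L HP HL HS). lra. }
  apply (Rmult_le_reg_r P); [lra|].
  replace (A / P * P) with A by (field; lra).
  replace (c * (1 + Z / (M * P0)) * P) with (c * (P + Z / M * (P / P0))) by (field; lra).
  assert (1 <= P / P0) by (apply (Rmult_le_reg_r P0); [lra|]; field_simplify; lra).
  assert (0 <= Z / M) by (apply Rdiv_nonneg; lra).
  assert (Z / M <= Z / M * (P / P0)) by nra. nra.
Qed.
End Summation.

(* [(ln z) ^ r / z] is nonincreasing once [ln z >= r]. *)
Lemma rpow_ln_le r M z : 1 <= r -> exp r <= M -> 0 <= z ->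
  rpow (ln z) r <= Rpower (ln M) r * (1 + z / M).
Proof.
  intros Hr HM Hz. pose proof (exp_pos r).
  assert (HlnM : r <= ln M) by (rewrite <- (ln_exp r); apply ln_le; lra).
  assert (HM0 : 0 < Rpower (ln M) r) by apply exp_pos.
  assert (0 <= z / M) by (apply Rdiv_nonneg; lra).
  unfold rpow. destruct (Rle_dec (ln z) 0) as [Hle|Hgt]; [nra|].
  assert (Hz0 : 0 < z).
  { destruct (Rle_lt_dec z 0) as [Hz0|]; auto. exfalso. apply Hgt. rewrite ln_nonpos; lra. }
  destruct (Rle_lt_dec z M) as [HzM|HMz].
  - assert (Rpower (ln z) r <= Rpower (ln M) r) by (apply Rle_Rpower_l; [|split; [|apply ln_le]]; lra).
    nra.
  - set (a := ln M) in *. set (b := ln z).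
    assert (Hab : a <= b) by (apply ln_le; lra).
    assert (Hexp : r * ln b <= r * ln a + (b - a)).
    { pose proof (ln_le_sub1 (b / a) ltac:(apply Rdiv_lt_0_compat; lra)) as Hln.
      rewrite ln_div in Hln by lra.
      assert (r * (b / a - 1) <= b - a); [|nra].
      replace (r * (b / a - 1)) with (r / a * (b - a)) by (field; lra).
      assert (r / a <= 1) by (apply (Rmult_le_reg_r a); [lra|]; field_simplify; lra).
      nra. }
    assert (Rpower b r <= Rpower a r * (z / M)); [|nra].
    replace (z / M) with (exp (b - a)) by (unfold Rminus, a, b; rewrite exp_plus, exp_Ropp, !exp_ln; lra).
    unfold Rpower. rewrite <- exp_plus. destruct (Req_dec (r * ln b) (r * ln a + (b - a))) as [->|Hne];
      [lra|left; apply exp_increasing; lra].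
Qed.

Lemma rpow_inv_le E a r : 1 <= r -> 0 < a -> E <= 2 * Rpower a r -> rpow E (/ r) <= 2 * a.
Proof.
  intros Hr Ha HE. unfold rpow. destruct (Rle_dec E 0); [lra|].
  assert (Hp : 0 < Rpower a r) by apply exp_pos.
  eapply Rle_trans; [apply Rle_Rpower_l; [left; apply Rinv_0_lt_compat|split; [|exact HE]]; lra|].
  rewrite <- Rpower_mult_distr, Rpower_mult, Rinv_r, Rpower_1 by lra.
  apply Rmult_le_compat_r; [lra|].
  replace 2 with (Rpower 2 1) at 2 by (apply Rpower_1; lra).
  apply Rle_Rpower; [lra|]. rewrite <- Rinv_1. apply Rinv_le_contravar; lra.
Qed.

Definition surviving (n : nat) (t : tree) : Prop := trunc_ok n t /\ reaches n t = true.

Lemma lsum_le_bounded_trees (F : tree -> R) n L :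
  (forall t, 0 <= F t) -> NoDup L -> Forall (surviving n) L ->
  exists D, lsum F L <= sumR F (bounded_trees D n).
Proof.
  intros HF HL HS. destruct (incl_bounded_trees n L) as [D HD].
  { rewrite Forall_forall in *. intros t Ht. apply HS; auto. }
  exists D. apply sumR_incl; auto.
Qed.

Section SurvivalProbability.
Variables (alpha : R) (rho : nat -> R) (L : R -> R).
Hypothesis alpha_gt1 : 1 < alpha.
Hypothesis rho_nonneg : forall k, 0 <= rho k.
Hypothesis rho_sum : infinite_sum rho 1.
Hypothesis rho_mean : infinite_sum (fun k => INR k * rho k) 1.
Hypothesis L_slow : slowly_varying_0 L.
Hypothesis rho_gf : forall s, 0 <= s < 1 ->
  infinite_sum (fun k => rho k * s ^ k) (s + Rpower (1 - s) alpha * L (1 - s)).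

(* With [f] the generating function of [rho], [1 - f (1 - x) = G x = x - phi x]. *)
Definition phi (x : R) : R := Rpower x alpha * L x.
Definition G (x : R) : R := x - phi x.
Definition phi_rate (x : R) : R := phi x / x.

Lemma G_series x : 0 < x <= 1 -> infinite_sum (fun k => rho k * (1 - (1 - x) ^ k)) (G x).
Proof.
  intros Hx. pose proof (rho_gf (1 - x) ltac:(lra)) as Hf.
  replace (1 - (1 - x)) with x in Hf by ring.
  apply (infinite_sum_ext (fun k => rho k - rho k * (1 - x) ^ k)); [intros; ring|].
  replace (G x) with (1 - (1 - x + Rpower x alpha * L x)) by (unfold G, phi; ring).
  apply infinite_sum_minus; auto.
Qed.

Lemma L_pos x : 0 < x <= 1 -> 0 < L x.
Proof. destruct L_slow as [HL _]. auto. Qed.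

Lemma phi_rate_pos x : 0 < x <= 1 -> 0 < phi_rate x.
Proof.
  intros Hx. unfold phi_rate, phi, Rpower. apply Rdiv_lt_0_compat; [|lra].
  apply Rmult_lt_0_compat; [apply exp_pos|apply L_pos; auto].
Qed.

Lemma phi_rate_G x : 0 < x -> phi_rate x = 1 - G x / x.
Proof. intros Hx. unfold phi_rate, G. field. lra. Qed.

(* Concavity of [G]: [G x / x] is nonincreasing. *)
Lemma phi_rate_mono x y : 0 < x -> x <= y -> y <= 1 -> phi_rate x <= phi_rate y.
Proof.
  intros Hx Hxy Hy. rewrite !phi_rate_G by lra.
  assert (x * G y <= y * G x).
  { apply (infinite_sum_le (fun k => x * (rho k * (1 - (1 - y) ^ k)))
                           (fun k => y * (rho k * (1 - (1 - x) ^ k))));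
      [|apply infinite_sum_scal, G_series; lra ..].
    intros k. pose proof (pow_complement_ratio x y k Hx Hxy Hy). pose proof (rho_nonneg k). nra. }
  assert (G y / y <= G x / x); [|lra].
  apply (Rmult_le_reg_l (x * y)); [nra|].
  replace (x * y * (G y / y)) with (x * G y) by (field; lra).
  replace (x * y * (G x / x)) with (y * G x) by (field; lra). lra.
Qed.

(* [phi_rate 1 = rho 0], and [rho 0 = 1] is excluded by the mean being [1]. *)
Lemma phi_rate_1_lt1 : phi_rate 1 < 1.
Proof.
  rewrite phi_rate_G by lra. unfold Rdiv. rewrite Rinv_1, Rmult_1_r.
  destruct (Rle_lt_dec (G 1) 0) as [HG|HG]; [exfalso|lra].
  assert (Hterm : forall k, 0 <= rho k * (1 - (1 - 1) ^ k)).
  { intros [|k]; simpl; [lra|]. pose proof (rho_nonneg (S k)). nra. }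
  assert (Hmean0 : infinite_sum (fun k => INR k * rho k) 0).
  { apply (infinite_sum_ext (fun _ => 0)); [|intros e He; exists 0%nat; intros n _;
      rewrite sum_cte; unfold R_dist; rewrite Rmult_0_l, Rminus_diag, Rabs_R0; lra].
    intros [|k]; [simpl; ring|].
    pose proof (term_le_infinite_sum _ _ (S k) Hterm (G_series 1 ltac:(lra))) as Hk.
    simpl in Hk. pose proof (rho_nonneg (S k)).
    assert (Hzero : rho (S k) = 0) by nra. rewrite Hzero. ring. }
  pose proof (uniqueness_sum _ _ _ rho_mean Hmean0). lra.
Qed.

Lemma phi_rate_half_eq x : 0 < x ->
  phi_rate (x / 2) = 2 * Rpower (/ 2) alpha * (Rpower x alpha * L (/ 2 * x) / x).
Proof.
  intros Hx. unfold phi_rate, phi. replace (x / 2) with (/ 2 * x) by field.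
  rewrite <- Rpower_mult_distr by lra. field. lra.
Qed.

Lemma phi_rate_half_contract : exists delta theta, 0 < delta <= 1 /\ 0 < theta < 1 /\
  forall x, 0 < x <= delta -> phi_rate (x / 2) <= theta * phi_rate x.
Proof.
  destruct L_slow as [_ HL].
  set (c0 := 2 * Rpower (/ 2) alpha).
  assert (Hc0 : 0 < c0 < 1).
  { assert (Hln : ln (/ 2) < 0) by (rewrite ln_Rinv by lra; pose proof ln2_pos; lra).
    unfold c0, Rpower. split; [pose proof (exp_pos (alpha * ln (/ 2))); lra|].
    assert (Hlt : exp (alpha * ln (/ 2)) < exp (ln (/ 2))) by (apply exp_increasing; nra).
    rewrite exp_ln in Hlt by lra. lra. }
  set (eps := (1 - c0) / (2 * c0)).
  assert (Heps : 0 < eps) by (apply Rdiv_lt_0_compat; lra).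
  destruct (HL (/ 2) ltac:(lra) eps Heps) as [d [Hd HLd]].
  pose proof (Rmin_l d 1). pose proof (Rmin_r d 1).
  exists (Rmin d 1 / 2), (c0 * (1 + eps)).
  split; [split; [apply Rdiv_lt_0_compat; [apply Rmin_glb_lt|]|]; lra|].
  assert (c0 * (1 + eps) = (1 + c0) / 2) by (unfold eps; field; lra).
  split; [lra|].
  intros x Hx. specialize (HLd x ltac:(lra)). apply Rabs_def2 in HLd as [HLd _].
  pose proof (L_pos x ltac:(lra)). pose proof (L_pos (/ 2 * x) ltac:(lra)).
  assert (HLx : L (/ 2 * x) <= (1 + eps) * L x).
  { assert (Hlt : L (/ 2 * x) / L x < 1 + eps) by lra.
    apply (Rmult_lt_compat_r (L x)) in Hlt; [|lra].
    unfold Rdiv in Hlt. rewrite Rmult_assoc, Rinv_l in Hlt; lra. }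
  rewrite phi_rate_half_eq by lra. fold c0. unfold phi_rate, phi.
  assert (0 < Rpower x alpha) by apply exp_pos.
  replace (c0 * (1 + eps) * (Rpower x alpha * L x / x)) with (c0 * (Rpower x alpha * ((1 + eps) * L x) / x))
    by (field; lra).
  apply Rmult_le_compat_l; [lra|]. unfold Rdiv.
  apply Rmult_le_compat_r; [left; apply Rinv_0_lt_compat; lra|].
  apply Rmult_le_compat_l; lra.
Qed.

(* [survival n = P(Z_n > 0)] for the untruncated process. *)
Fixpoint survival (n : nat) : R :=
  match n with O => 1 | S m => G (survival m) end.

Lemma survival_S n : 0 < survival n -> survival (S n) = survival n * (1 - phi_rate (survival n)).
Proof. intros H. simpl. unfold G, phi_rate. field. lra. Qed.

Lemma phi_rate_bounds x : 0 < x <= 1 -> 0 < phi_rate x <= phi_rate 1.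
Proof. intros Hx. split; [apply phi_rate_pos|apply phi_rate_mono]; lra. Qed.

Lemma survival_bounds n : 0 < survival n <= 1.
Proof.
  induction n as [|n IH]; [simpl; lra|]. rewrite survival_S by lra.
  pose proof (phi_rate_bounds _ IH). pose proof phi_rate_1_lt1.
  split; [apply Rmult_lt_0_compat|]; nra.
Qed.

Lemma phi_rate_survival_bounds n : 0 < phi_rate (survival n) <= phi_rate 1.
Proof. apply phi_rate_bounds, survival_bounds. Qed.

Lemma survival_S_le n : survival (S n) <= survival n.
Proof.
  pose proof (survival_bounds n). pose proof (phi_rate_survival_bounds n).
  rewrite survival_S by lra. nra.
Qed.

Lemma survival_antitone k m : (k <= m)%nat -> survival m <= survival k.
Proof. induction 1 as [|m _ IH]; [lra|]. pose proof (survival_S_le m). lra. Qed.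

Lemma survival_eventually_le delta : 0 < delta <= 1 ->
  exists m0, forall m, (m0 <= m)%nat -> survival m <= delta.
Proof.
  intros Hd. set (eta := phi_rate delta).
  assert (Heta : 0 < eta <= phi_rate 1) by (apply phi_rate_bounds; lra).
  pose proof phi_rate_1_lt1.
  assert (Hgeom : forall m, delta < survival m -> survival m <= (1 - eta) ^ m).
  { induction m as [|m IH]; intros Hm; [simpl; lra|].
    pose proof (survival_S_le m). pose proof (survival_bounds m).
    assert (eta <= phi_rate (survival m)) by (apply phi_rate_mono; lra).
    assert (survival m <= (1 - eta) ^ m) by (apply IH; lra).
    rewrite survival_S in * by lra. simpl. nra. }
  destruct (pow_lt_1_zero (1 - eta) ltac:(rewrite Rabs_right; lra) delta ltac:(lra)) as [N HN].
  exists N. intros m Hm. destruct (Rle_lt_dec (survival m) delta) as [?|Hlt]; auto.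
  specialize (HN m Hm). rewrite Rabs_right in HN by (apply Rle_ge, pow_le; lra).
  specialize (Hgeom m Hlt). lra.
Qed.

(* [-ln (1 - u) >= u] summed along the recursion, with [phi_rate] nonincreasing in time. *)
Lemma ln_survival_ratio_ge k j :
  INR j * phi_rate (survival (k + j)) <= ln (survival k / survival (k + j)).
Proof.
  induction j as [|j IH].
  - rewrite Nat.add_0_r. unfold Rdiv. rewrite Rinv_r, ln_1; [simpl; lra|].
    pose proof (survival_bounds k); lra.
  - replace (k + S j)%nat with (S (k + j)) by lia. set (n := (k + j)%nat) in *.
    pose proof (survival_bounds n). pose proof (survival_bounds k).
    pose proof (phi_rate_survival_bounds n). pose proof phi_rate_1_lt1.
    pose proof (survival_S_le n). pose proof (survival_bounds (S n)).
    assert (phi_rate (survival (S n)) <= phi_rate (survival n)) by (apply phi_rate_mono; lra).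
    replace (survival k / survival (S n)) with (survival k / survival n * / (1 - phi_rate (survival n)))
      by (rewrite survival_S by lra; field; split; lra).
    rewrite ln_mult, ln_Rinv by (try apply Rdiv_lt_0_compat; try apply Rinv_0_lt_compat; lra).
    pose proof (ln_le_sub1 (1 - phi_rate (survival n)) ltac:(lra)).
    rewrite S_INR. pose proof (pos_INR j). nra.
Qed.

Section Doubling.
Variables (delta theta : R) (m0 : nat).
Hypothesis delta_bounds : 0 < delta <= 1.
Hypothesis theta_bounds : 0 < theta < 1.
Hypothesis half_contract : forall x, 0 < x <= delta -> phi_rate (x / 2) <= theta * phi_rate x.
Hypothesis survival_le_delta : forall m, (m0 <= m)%nat -> survival m <= delta.

Lemma phi_rate_dyadic_contract J x : 0 < x <= delta ->
  phi_rate (x * (/ 2) ^ J) <= theta ^ J * phi_rate x.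
Proof.
  intros Hx. induction J as [|J IH]; [simpl; rewrite Rmult_1_r; lra|].
  assert (0 < (/ 2) ^ J <= 1) by (split; [apply pow_lt|apply pow_le1]; lra).
  replace (x * (/ 2) ^ S J) with (x * (/ 2) ^ J / 2) by (simpl; field).
  eapply Rle_trans; [apply half_contract; split; [apply Rmult_lt_0_compat|]; nra|].
  simpl. nra.
Qed.

(* Either [y = survival m] is much smaller than [x = survival k], and then [phi_rate] has
   contracted by [theta ^ J]; or it is not, and then the [m - k] steps from [x] to [y]
   cost only [J + 1] halvings in the logarithmic potential. *)
Lemma doubling_step M k m :
  1 <= M -> 2 * ln 2 * (1 + ln (3 * M) / (- ln theta)) <= M ->
  (1 <= k)%nat -> (m0 <= k)%nat -> (2 * k <= m <= 2 * k + 1)%nat ->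
  INR k * phi_rate (survival k) <= M -> INR m * phi_rate (survival m) <= M.
Proof.
  intros HM1 HMfix Hk1 Hk Hm HMk.
  set (x := survival k) in *. set (y := survival m). set (lam := - ln theta) in *.
  assert (Hlam : 0 < lam) by (apply neg_ln_pos; auto).
  assert (Hx : 0 < x <= delta) by (split; [apply survival_bounds|apply survival_le_delta; lia]).
  assert (Hy : 0 < y <= x) by (split; [apply survival_bounds|apply survival_antitone; lia]).
  pose proof (phi_rate_pos y ltac:(lra)) as Hhy. pose proof (phi_rate_pos x ltac:(lra)).
  destruct (dyadic_bracket x y Hy) as [J [HJlo HJhi]].
  assert (0 < theta ^ J) by (apply pow_lt; lra).
  assert (Hcontract : phi_rate y <= theta ^ J * phi_rate x).
  { eapply Rle_trans; [|apply phi_rate_dyadic_contract; auto].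
    apply phi_rate_mono; try lra. pose proof (pow_le1 (/ 2) J). nra. }
  pose proof (ln_div_lt_halvings x y J ltac:(lra) ltac:(lra) HJlo) as Hhalvings.
  pose proof (ln_survival_ratio_ge k (m - k)) as Hpot.
  replace (k + (m - k))%nat with m in Hpot by lia. fold x y in Hpot.
  assert (Hm2 : INR m <= 2 * INR (m - k)).
  { rewrite minus_INR by lia. assert (INR (2 * k) <= INR m) by (apply le_INR; lia).
    rewrite mult_INR in *. simpl in *. lra. }
  assert (Hm3 : INR m <= 3 * INR k).
  { assert (INR m <= INR (3 * k)) by (apply le_INR; lia). rewrite mult_INR in *. simpl in *. lra. }
  destruct (Rle_lt_dec (3 * theta ^ J * M) 1) as [Hsmall|Hbig].
  - pose proof (pos_INR k). pose proof (pos_INR m). fold y. nra.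
  - assert (HJ : INR J * lam < ln (3 * M)).
    { assert (ln 1 < ln (3 * theta ^ J * M)) by (apply ln_increasing; lra).
      rewrite ln_1, !ln_mult, ln_pow in * by (try apply pow_lt; lra). unfold lam. lra. }
    assert (INR J < ln (3 * M) / lam).
    { apply (Rmult_lt_reg_r lam); auto. unfold Rdiv. rewrite Rmult_assoc, Rinv_l; lra. }
    pose proof ln2_pos. rewrite S_INR in Hhalvings. fold y. nra.
Qed.
End Doubling.

Lemma n_phi_rate_survival_bounded : exists M, forall m, INR m * phi_rate (survival m) <= M.
Proof.
  destruct phi_rate_half_contract as [delta [theta [Hdelta [Htheta Hcontract]]]].
  destruct (survival_eventually_le delta Hdelta) as [m0 Hm0].
  set (lam := - ln theta).
  assert (Hlam : 0 < lam) by (apply neg_ln_pos; auto).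
  pose proof ln2_pos. pose proof (pos_INR m0).
  destruct (log_dominated (2 * ln 2 * (1 + ln 3 / lam)) (2 * ln 2 / lam) (2 + 2 * INR m0))
    as [M [HM0 HM]]; [apply Rdiv_lt_0_compat; lra|lra|].
  assert (HMfix : 2 * ln 2 * (1 + ln (3 * M) / lam) <= M).
  { rewrite ln_mult by lra. replace (2 * ln 2 * (1 + (ln 3 + ln M) / lam))
      with (2 * ln 2 * (1 + ln 3 / lam) + 2 * ln 2 / lam * ln M) by (field; lra). auto. }
  exists M. intros m. induction m as [m IH] using (well_founded_induction Wf_nat.lt_wf).
  destruct (Compare_dec.le_lt_dec (2 * S m0) m) as [Hm|Hm].
  - apply (doubling_step delta theta m0 Hdelta Htheta Hcontract Hm0 M (m / 2)).
    + lra.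
    + exact HMfix.
    + apply Nat.div_le_lower_bound; lia.
    + apply Nat.div_le_lower_bound; lia.
    + pose proof (Nat.div_mod m 2). pose proof (Nat.mod_upper_bound m 2). lia.
    + apply IH. apply Nat.div_lt; lia.
  - pose proof (phi_rate_survival_bounds m). pose proof phi_rate_1_lt1. pose proof (pos_INR m).
    assert (INR m <= 2 * INR (S m0)) by (rewrite <- (mult_INR 2); apply le_INR; lia).
    rewrite S_INR in *. nra.
Qed.

(* [survival] decays at most polynomially: [ln (1 / (1 - u)) <= u / (1 - phi_rate 1)] and
   [u = phi_rate (survival n) = O(1 / n)]. *)
Lemma ln_survival_ratio_le : exists K, 0 <= K /\ forall p j, (1 <= p)%nat ->
  ln (survival p / survival (p + j)) <= K * ln (INR (p + j) / INR p).
Proof.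
  destruct n_phi_rate_survival_bounded as [M HM]. pose proof phi_rate_1_lt1 as Hc1.
  pose proof (HM 0%nat) as HM0. simpl in HM0. rewrite Rmult_0_l in HM0.
  exists (2 * M / (1 - phi_rate 1)). split.
  { apply Rdiv_nonneg; lra. }
  intros p j Hp. induction j as [|j IH].
  - rewrite Nat.add_0_r. unfold Rdiv. rewrite !Rinv_r, ln_1; [lra|apply not_0_INR; lia|].
    pose proof (survival_bounds p); lra.
  - replace (p + S j)%nat with (S (p + j)) by lia. set (n := (p + j)%nat) in *.
    pose proof (survival_bounds n). pose proof (survival_bounds p).
    pose proof (phi_rate_survival_bounds n) as Hu01. pose proof (survival_S n) as HS.
    specialize (HM n). set (u := phi_rate (survival n)) in *.
    assert (1 <= INR n) by (apply (le_INR 1); unfold n; lia).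
    assert (1 <= INR p) by (apply (le_INR 1); lia).
    replace (survival p / survival (S n)) with (survival p / survival n * / (1 - u))
      by (rewrite HS by lra; field; split; lra).
    replace (INR (S n) / INR p) with (INR n / INR p * (INR (S n) / INR n)) by (field; lra).
    assert (0 < INR (S n) / INR n) by (rewrite S_INR; apply Rdiv_lt_0_compat; lra).
    rewrite ln_mult, ln_mult, ln_Rinv
      by (first [assumption | lra | apply Rdiv_lt_0_compat; lra | apply Rinv_0_lt_compat; lra]).
    pose proof (ln_le_sub1 (/ (1 - u)) ltac:(apply Rinv_0_lt_compat; lra)) as Hln.
    rewrite ln_Rinv in Hln by lra.
    assert (Hu : / (1 - u) - 1 <= u / (1 - phi_rate 1)).
    { replace (/ (1 - u) - 1) with (u / (1 - u)) by (field; lra).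
      unfold Rdiv. apply Rmult_le_compat_l; [lra|]. apply Rinv_le_contravar; lra. }
    assert (HuM : u <= M / INR n).
    { apply (Rmult_le_reg_l (INR n)); [lra|]. field_simplify; lra. }
    pose proof (inv_INR_le_ln_succ n ltac:(unfold n; lia)).
    assert (M / INR n <= M * (2 * ln (INR (S n) / INR n))) by (unfold Rdiv; apply Rmult_le_compat_l; lra).
    assert (u / (1 - phi_rate 1) <= 2 * M / (1 - phi_rate 1) * ln (INR (S n) / INR n)).
    { replace (2 * M / (1 - phi_rate 1) * ln (INR (S n) / INR n))
        with (M * (2 * ln (INR (S n) / INR n)) / (1 - phi_rate 1)) by (field; lra).
      unfold Rdiv. apply Rmult_le_compat_r; [left; apply Rinv_0_lt_compat|]; lra. }
    lra.
Qed.

Lemma rho_partial_le1 D : sum_f_R0 rho D <= 1.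
Proof. apply sum_incr; auto. Qed.

Lemma mean_partial_le1 D : sum_f_R0 (fun k => INR k * rho k) D <= 1.
Proof. apply sum_incr; auto. intros; apply Rmult_le_pos; [apply pos_INR|auto]. Qed.

Definition tail (D : nat) : R := 1 - sum_f_R0 rho D.

Lemma tail_nonneg D : 0 <= tail D.
Proof. unfold tail. pose proof (rho_partial_le1 D). lra. Qed.

Lemma tail_small eps : 0 < eps -> exists D, tail D < eps.
Proof.
  intros He. destruct (rho_sum eps He) as [N HN]. exists N. specialize (HN N (le_n N)).
  unfold R_dist in HN. apply Rabs_def2 in HN. unfold tail. lra.
Qed.

Lemma G_partial_sum x D : 0 < x <= 1 ->
  sum_f_R0 (fun k => rho k * (1 - (1 - x) ^ k)) D <= G x <=
  sum_f_R0 (fun k => rho k * (1 - (1 - x) ^ k)) D + tail D.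
Proof.
  intros Hx. split.
  - apply sum_incr; [apply G_series; auto|].
    intros k. pose proof (pow_le1 (1 - x) k ltac:(lra)). pose proof (rho_nonneg k). nra.
  - assert (Hrest : sum_f_R0 (fun k => rho k - rho k * (1 - (1 - x) ^ k)) D <= 1 - G x).
    { apply sum_incr; [apply infinite_sum_minus, G_series; auto|].
      intros k. pose proof (pow_le (1 - x) k ltac:(lra)). pose proof (rho_nonneg k). nra. }
    rewrite minus_sum in Hrest. unfold tail. lra.
Qed.

Lemma trunc_survival_le D n : trunc_survival rho D n <= survival n.
Proof.
  induction n as [|n IH]; [rewrite trunc_survival_0; simpl; lra|].
  rewrite trunc_survival_S. pose proof (survival_bounds n) as Hq.
  eapply Rle_trans; [|apply (G_partial_sum (survival n) D Hq)]. apply sum_Rle. intros k _.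
  apply Rmult_le_compat_l; auto.
  pose proof (trunc_survival_bounds rho rho_nonneg D n).
  pose proof (trunc_mass_bounds rho rho_nonneg rho_partial_le1 D n).
  pose proof (pow_gap_mono (trunc_survival rho D n) (trunc_mass rho D n) 1 k
                ltac:(lra) ltac:(lra) ltac:(lra)).
  assert ((1 - survival n) ^ k <= (1 - trunc_survival rho D n) ^ k) by (apply pow_incr; lra).
  rewrite pow1 in *.
  lra.
Qed.

Lemma trunc_mass_ge D n : 1 - trunc_mass rho D n <= INR n * tail D.
Proof.
  induction n as [|n IH]; [rewrite trunc_mass_0; simpl; lra|].
  rewrite trunc_mass_S, S_INR.
  pose proof (trunc_mass_bounds rho rho_nonneg rho_partial_le1 D n).
  set (M := trunc_mass rho D n) in *.
  assert (Hterms : sum_f_R0 (fun k => rho k * (1 - M ^ k)) D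
                   <= (1 - M) * sum_f_R0 (fun k => INR k * rho k) D).
  { rewrite scal_sum. apply sum_Rle. intros k _.
    pose proof (pow_sub_le 1 M k ltac:(lra) ltac:(lra)). rewrite pow1, Rabs_right in * by lra.
    pose proof (rho_nonneg k). nra. }
  assert (Hsplit : 1 - sum_f_R0 (fun k => rho k * M ^ k) D
                   = tail D + sum_f_R0 (fun k => rho k * (1 - M ^ k)) D).
  { unfold tail. rewrite (sum_eq (fun k => rho k * (1 - M ^ k)) (fun k => rho k - rho k * M ^ k))
      by (intros; ring).
    rewrite minus_sum. ring. }
  pose proof (mean_partial_le1 D). pose proof (tail_nonneg D). nra.
Qed.

Lemma trunc_survival_ge D n : survival n - trunc_survival rho D n <= (INR n + 1) ^ 2 * tail D.
Proof.
  induction n as [|n IH]; [rewrite trunc_survival_0; simpl; pose proof (tail_nonneg D); lra|].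
  rewrite trunc_survival_S, S_INR. pose proof (survival_bounds n) as Hq.
  destruct (G_partial_sum (survival n) D Hq) as [_ HG]. simpl survival.
  pose proof (trunc_survival_bounds rho rho_nonneg D n).
  pose proof (trunc_mass_bounds rho rho_nonneg rho_partial_le1 D n).
  pose proof (trunc_survival_le D n). pose proof (trunc_mass_ge D n). pose proof (tail_nonneg D).
  set (M := trunc_mass rho D n) in *. set (s := trunc_survival rho D n) in *. set (q := survival n) in *.
  set (e := 2 * (1 - M) + (q - s)).
  assert (Hterms : sum_f_R0 (fun k => rho k * (1 - (1 - q) ^ k)) D
                   - sum_f_R0 (fun k => rho k * (M ^ k - (M - s) ^ k)) D
                   <= e * sum_f_R0 (fun k => INR k * rho k) D).
  { rewrite <- minus_sum, scal_sum. apply sum_Rle. intros k _.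
    pose proof (pow_sub_le 1 M k ltac:(lra) ltac:(lra)). rewrite pow1, Rabs_right in * by lra.
    pose proof (pow_sub_le (M - s) (1 - q) k ltac:(lra) ltac:(lra)).
    assert (Rabs (M - s - (1 - q)) <= (1 - M) + (q - s)) by (apply Rabs_le; lra).
    pose proof (pos_INR k). pose proof (rho_nonneg k).
    assert ((M - s) ^ k - (1 - q) ^ k <= INR k * ((1 - M) + (q - s))) by nra.
    unfold e. nra. }
  assert (0 <= sum_f_R0 (fun k => INR k * rho k) D)
    by (apply cond_pos_sum; intros; apply Rmult_le_pos; [apply pos_INR|auto]).
  pose proof (mean_partial_le1 D). pose proof (pos_INR n).
  assert (e * sum_f_R0 (fun k => INR k * rho k) D <= e) by (unfold e in *; nra).
  unfold e in *. nra.
Qed.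

Lemma lsum_weight_le1 n l : NoDup l -> Forall (surviving n) l -> lsum (gw_weight rho n) l <= 1.
Proof.
  intros Hl HS. destruct (lsum_le_bounded_trees (gw_weight rho n) n l) as [D HD]; auto.
  { intros; apply gw_weight_nonneg; auto. }
  pose proof (trunc_mass_bounds rho rho_nonneg rho_partial_le1 D n).
  unfold trunc_mass in *. lra.
Qed.

Lemma lsum_weight_reduced_count_le n p l : (p <= n)%nat -> NoDup l -> Forall (surviving n) l ->
  lsum (fun t => gw_weight rho n t * INR (reduced_count n (n - p) t)) l <= survival p.
Proof.
  intros Hpn Hl HS.
  destruct (lsum_le_bounded_trees (fun t => gw_weight rho n t * INR (reduced_count n (n - p) t)) n l)
    as [D HD]; auto.
  { intros; apply Rmult_le_pos; [apply gw_weight_nonneg; auto|apply pos_INR]. }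
  pose proof (sumR_reduced_count_le rho rho_nonneg rho_partial_le1
                mean_partial_le1 D p (n - p)) as Hsum.
  replace (p + (n - p))%nat with n in Hsum by lia.
  pose proof (trunc_survival_le D p).
  lra.
Qed.

(* Truncating degrees at a large [D] loses at most half of [P(Z_n > 0)]. *)
Lemma lsum_weight_ge n : exists l, NoDup l /\ Forall (surviving n) l /\
  survival n / 2 <= lsum (gw_weight rho n) l.
Proof.
  pose proof (survival_bounds n).
  pose proof (pos_INR n). assert (Hn2 : 0 < (INR n + 1) ^ 2) by nra.
  destruct (tail_small (survival n / (2 * (INR n + 1) ^ 2))) as [D HD].
  { apply Rdiv_lt_0_compat; lra. }
  exists (filter (reaches n) (bounded_trees D n)). split; [apply NoDup_filter, NoDup_bounded_trees|].
  split.
  { rewrite Forall_forall. intros t Ht. apply filter_In in Ht as [Ht Hr].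
    split; [eapply bounded_trees_trunc_ok; eauto|auto]. }
  change (lsum (gw_weight rho n) (filter (reaches n) (bounded_trees D n)))
    with (sumR (gw_weight rho n) (filter (reaches n) (bounded_trees D n))).
  rewrite sumR_filter. fold (trunc_survival rho D n).
  pose proof (trunc_survival_ge D n).
  apply (Rmult_lt_compat_l ((INR n + 1) ^ 2)) in HD; auto.
  replace ((INR n + 1) ^ 2 * (survival n / (2 * (INR n + 1) ^ 2))) with (survival n / 2) in HD
    by (field; lra).
  lra.
Qed.

Lemma reduced_count_log_moment r n p : 1 <= r -> (p <= n)%nat ->
  exists E, gw_cond_expect rho n (fun t => rpow (ln (INR (reduced_count n (n - p) t))) r) E /\
            rpow E (/ r) <= 2 * (r + ln 2 + ln (survival p / survival n)).
Proof.
  intros Hr Hpn. pose proof (survival_bounds n). pose proof (survival_bounds p).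
  pose proof (survival_antitone p n Hpn). pose proof (exp_pos r).
  set (ratio := survival p / survival n).
  assert (Hratio : 1 <= ratio)
    by (apply (Rmult_le_reg_r (survival n)); [lra|]; unfold ratio; field_simplify; lra).
  set (M := Rmax (exp r) (2 * ratio)).
  pose proof (Rmax_l (exp r) (2 * ratio)) as HMr. pose proof (Rmax_r (exp r) (2 * ratio)) as HMratio.
  fold M in HMr, HMratio.
  assert (HlnM : r <= ln M) by (rewrite <- (ln_exp r); apply ln_le; lra).
  set (c := Rpower (ln M) r). assert (Hc : 0 < c) by apply exp_pos.
  destruct (has_sum_ratio_le (surviving n) (gw_weight rho n)
              (fun t => rpow (ln (INR (reduced_count n (n - p) t))) r)
              (fun t => INR (reduced_count n (n - p) t)) (survival n / 2) (survival p) c M)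
    as [A [P [HA [HP HAP]]]]; try lra.
  - intros; apply gw_weight_nonneg; auto.
  - intros t _. apply rpow_ln_le; auto. apply pos_INR.
  - apply lsum_weight_le1.
  - intros l Hl HS. apply lsum_weight_reduced_count_le; auto.
  - apply lsum_weight_ge.
  - exists (A / P). split; [exists A, P; auto|].
    assert (HE : A / P <= 2 * c).
    { replace (survival p / (M * (survival n / 2))) with (2 * ratio / M) in HAP
        by (unfold ratio; field; lra).
      assert (2 * ratio / M <= 1) by (apply (Rmult_le_reg_r M); [lra|]; field_simplify; lra).
      nra. }
    eapply Rle_trans; [apply (rpow_inv_le _ (ln M) r); auto; lra|].
    pose proof ln2_pos. pose proof (ln_ge0 ratio Hratio).
    unfold M, Rmax. destruct (Rle_dec (exp r) (2 * ratio)).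
    + rewrite ln_mult by lra. lra.
    + rewrite ln_exp. lra.
Qed.

Lemma ln_survival_bounds : exists K c, 0 <= K /\ 0 <= c /\
  (forall n p, (1 <= p <= n)%nat -> ln (survival p / survival n) <= K * ln (INR n / INR p)) /\
  (forall n, (1 <= n)%nat -> ln (survival 0 / survival n) <= c + K * ln (INR n)).
Proof.
  destruct ln_survival_ratio_le as [K [HK Hratio]].
  pose proof (survival_bounds 1). pose proof (survival_S_le 0).
  exists K, (ln (survival 0 / survival 1)). split; [auto|]. split; [|split].
  - apply ln_ge0. simpl (survival 0). apply (Rmult_le_reg_r (survival 1)); [lra|]. field_simplify; lra.
  - intros n p Hpn. specialize (Hratio p (n - p)%nat ltac:(lia)).
    replace (p + (n - p))%nat with n in Hratio by lia. auto.
  - intros n Hn. specialize (Hratio 1%nat (n - 1)%nat (le_n 1)).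
    replace (1 + (n - 1))%nat with n in Hratio by lia.
    pose proof (survival_bounds 0). pose proof (survival_bounds n).
    replace (survival 0 / survival n) with (survival 0 / survival 1 * (survival 1 / survival n))
      by (field; lra).
    rewrite ln_mult by (apply Rdiv_lt_0_compat; lra).
    replace (INR n / INR 1) with (INR n) in Hratio by (simpl; field). lra.
Qed.
End SurvivalProbability.

Theorem mainTheorem14 (alpha : R) (rho : nat -> R) (L : R -> R)
  (Halpha : 1 < alpha <= 2)
  (Hnonneg : forall k, 0 <= rho k)
  (Hprob : infinite_sum rho 1)
  (Hmean : infinite_sum (fun k => INR k * rho k) 1)
  (Hnondeg : rho 1%nat <> 1)
  (HL : slowly_varying_0 L)
  (Hgf : forall s, 0 <= s < 1 ->
     infinite_sum (fun k => rho k * s ^ k) (s + Rpower (1 - s) alpha * L (1 - s))) :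
  forall r : R, 1 <= r ->
  exists C : R,
    (forall n p : nat, (2 <= n)%nat -> (1 <= p)%nat -> (2 * p <= n)%nat ->
       exists E, gw_cond_expect rho n
                   (fun t => rpow (ln (INR (reduced_count n (n - p) t))) r) E /\
                 rpow E (/ r) <= C * ln (INR n / INR p)) /\
    (forall n : nat, (2 <= n)%nat ->
       exists E, gw_cond_expect rho n
                   (fun t => rpow (ln (INR (reduced_count n n t))) r) E /\
                 rpow E (/ r) <= C * ln (INR n)).
Proof.
  intros r Hr. assert (Halpha1 : 1 < alpha) by lra.
  destruct (ln_survival_bounds alpha rho L Halpha1 Hnonneg Hprob Hmean HL Hgf)
    as [K [c [HK [Hc [Hratio Hroot]]]]].
  pose proof ln2_pos. exists (2 * ((r + ln 2 + c) / ln 2 + K)). split.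
  - intros n p Hn Hp Hpn.
    destruct (reduced_count_log_moment alpha rho L Hnonneg Hprob Hmean HL Hgf r n p Hr
                ltac:(lia)) as [E [HE HEr]].
    exists E. split; [exact HE|].
    assert (Hx : ln 2 <= ln (INR n / INR p)).
    { apply ln_le; [lra|]. assert (1 <= INR p) by (apply (le_INR 1); lia).
      assert (INR (2 * p) <= INR n) by (apply le_INR; lia). rewrite mult_INR in *.
      apply (Rmult_le_reg_r (INR p)); [lra|]. field_simplify; simpl in *; lra. }
    pose proof (Hratio n p ltac:(lia)). pose proof (affine_le_linear (r + ln 2 + c) K _ ltac:(lra) Hx). lra.
  - intros n Hn.
    destruct (reduced_count_log_moment alpha rho L Hnonneg Hprob Hmean HL Hgf r n 0 Hr
                ltac:(lia)) as [E [HE HEr]].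
    rewrite Nat.sub_0_r in HE. exists E. split; [exact HE|].
    assert (Hx : ln 2 <= ln (INR n)) by (apply ln_le; [lra|apply (le_INR 2); lia]).
    pose proof (Hroot n ltac:(lia)). pose proof (affine_le_linear (r + ln 2 + c) K _ ltac:(lra) Hx). lra.
Qed.
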